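(* Let $A,B\in\mathbb{R}^{n\times n}$, let $\phi,\psi:\mathbb{R}^n\to\mathbb{R}^n$, and let $\Omega$ be a positive diagonal matrix. Assume there are constants $L_1,L_2>0$ with $\|\phi(u)-\phi(v)\|\le L_1\|u-v\|$ and $\|\psi(u)-\psi(v)\|\le L_2\|u-v\|$ for all $u,v\in\mathbb{R}^n$. Let $A+\Omega B=M-N$ with $M$ nonsingular, and set $$\alpha=\|M^{-1}\|,\quad \beta=\|N\|+L_1+L_2\|\Omega\|,\quad \gamma=\|A-\Omega B\|+L_1+L_2\|\Omega\|.$$ Suppose the VNCP has a solution $x^*$. If $$\alpha(\beta+\gamma)<1\quad\text{and}\quad 0<\tau<\frac{2(1-\alpha\beta)}{1-\alpha\beta+\alpha\gamma},$$ then for every initial pair $(x^0,y^0)\in\mathbb{R}^n\times\mathbb{R}^n$ the sequence $\{x^k\}$ generated by the FPI method converges to $x^*$, and $x^*$ is the unique solution of the VNCP.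
   Context: The vertical nonlinear complementarity problem (VNCP) is: find $x\in\mathbb{R}^n$ such that $u(x):=Ax+\phi(x)\ge 0$, $v(x):=Bx+\psi(x)\ge0$ and $u(x)^Tv(x)=0$ (inequalities componentwise), where $\phi,\psi$ act componentwise, i.e. $(\phi(x))_i=\phi(x_i)$, $(\psi(x))_i=\psi(x_i)$ for scalar functions $\phi,\psi$. For a positive diagonal $\Omega$, $x$ solves the VNCP iff $(A+\Omega B)x=|(A-\Omega B)x+\phi(x)-\Omega\psi(x)|-\phi(x)-\Omega\psi(x)$, where $|\cdot|$ is the componentwise absolute value. The FPI method, with splitting $A+\Omega B=M-N$ ($M$ nonsingular) and parameter $\tau>0$, generates from $(x^0,y^0)$: $$x^{k+1}=M^{-1}\big[Nx^k+y^k-\phi(x^k)-\Omega\psi(x^k)\big],\qquad y^{k+1}=(1-\tau)y^k+\tau\,\big|(A-\Omega B)x^{k+1}+\phi(x^{k+1})-\Omega\psi(x^{k+1})\big|.$$ $\|\cdot\|$ denotes the Euclidean vector norm and the induced spectral matrix norm. *)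

From HB Require Import structures.
From mathcomp Require Import all_boot all_order all_algebra.
From mathcomp Require Import all_classical all_reals all_analysis.
Set Implicit Arguments. Unset Strict Implicit. Unset Printing Implicit Defensive.
Import Order.TTheory GRing.Theory Num.Theory.
Import numFieldNormedType.Exports.
Local Open Scope classical_set_scope.
Local Open Scope ring_scope.

Section Defs.
Variable R : realType.

Definition enorm n (x : 'cV[R]_n) : R := Num.sqrt (\sum_i (x i 0) ^+ 2).

Definition opnorm m n (A : 'M[R]_(m, n)) : R :=
  sup [set enorm (A *m x) | x in [set x : 'cV[R]_n | enorm x <= 1]].

Definition cw n (f : R -> R) (x : 'cV[R]_n) : 'cV[R]_n := map_mx f x.

Definition vabs n (x : 'cV[R]_n) : 'cV[R]_n := map_mx (fun a => `|a|) x.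

Definition vnonneg n (x : 'cV[R]_n) : Prop := forall i, 0 <= x i 0.

Definition vncp_sol n (A B : 'M[R]_n) (phi psi : R -> R) (x : 'cV[R]_n) : Prop :=
  let u := A *m x + cw phi x in
  let v := B *m x + cw psi x in
  vnonneg u /\ vnonneg v /\ (u^T *m v) 0 0 = 0.

Definition fpi_step n (A B Om M N : 'M[R]_n) (phi psi : R -> R) (tau : R)
  (p : 'cV[R]_n * 'cV[R]_n) : 'cV[R]_n * 'cV[R]_n :=
  let x := p.1 in let y := p.2 in
  let x' := invmx M *m (N *m x + y - cw phi x - Om *m cw psi x) in
  let y' := (1 - tau) *: y +
            tau *: vabs ((A - Om *m B) *m x' + cw phi x' - Om *m cw psi x') in
  (x', y').

Definition fpi_seq n (A B Om M N : 'M[R]_n) (phi psi : R -> R) (tau : R)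
  (x0 y0 : 'cV[R]_n) (k : nat) : 'cV[R]_n * 'cV[R]_n :=
  iter k (fpi_step A B Om M N phi psi tau) (x0, y0).

End Defs.

From HB Require Import structures.
From mathcomp Require Import all_boot all_order all_algebra.
From mathcomp Require Import all_classical all_reals all_analysis.
From mathcomp Require Import ring lra.
Import Order.TTheory GRing.Theory Num.Theory.
Import numFieldNormedType.Exports.
Local Open Scope classical_set_scope.
Local Open Scope ring_scope.

(* For a solution [x*] of the VNCP, the modulus reformulation makes
   [(x*, |g x*|)] a fixed point of the FPI step, where
   [g x = (A - Om B) x + phi x - Om psi x].  Writing [e_k = |x^k - x*|] and
   [f_k = |y^k - |g x*||], one step gives
     [e_(k+1) <= alpha beta e_k + alpha f_k] and
     [f_(k+1) <= |1 - tau| f_k + tau gamma e_(k+1)],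
   and the hypotheses on [alpha], [beta], [gamma], [tau] are exactly what makes
   this coupled recurrence contract geometrically.  Since the iterates from a
   single starting pair then converge to every solution, the solution is unique. *)

Section EuclideanNorm.
Context {R : realType} {n : nat}.
Implicit Types (x y : 'cV[R]_n) (c : R).

Lemma enorm_ge0 x : 0 <= enorm x.
Proof. exact: sqrtr_ge0. Qed.

Lemma enorm_sqr x : enorm x ^+ 2 = \sum_i x i 0 ^+ 2.
Proof. by rewrite sqr_sqrtr // sumr_ge0 // => i _; exact: sqr_ge0. Qed.

Lemma ler_enorm_sqr x y : (forall i, x i 0 ^+ 2 <= y i 0 ^+ 2) -> enorm x <= enorm y.
Proof. by move=> le_xy; apply/ler_wsqrtr/ler_sum => i _. Qed.

Lemma enormZ c x : enorm (c *: x) = `|c| * enorm x.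
Proof.
rewrite /enorm (eq_bigr (fun i => c ^+ 2 * x i 0 ^+ 2)); last first.
  by move=> i _; rewrite mxE exprMn.
by rewrite -mulr_sumr sqrtrM ?sqr_ge0 // sqrtr_sqr.
Qed.

Lemma enormN x : enorm (- x) = enorm x.
Proof. by rewrite -scaleN1r enormZ normrN1 mul1r. Qed.

Lemma enorm0 : enorm (0 : 'cV[R]_n) = 0.
Proof. by rewrite -(scale0r 0) enormZ normr0 mul0r. Qed.

Lemma ler_coord_enorm x i : `|x i 0| <= enorm x.
Proof.
rewrite -sqrtr_sqr; apply: ler_wsqrtr.
by rewrite (bigD1 i) //= lerDl sumr_ge0 // => j _; exact: sqr_ge0.
Qed.

Lemma enorm_eq0 x : enorm x = 0 -> x = 0.
Proof.
move=> x0; apply/matrixP => i j; rewrite (ord1 j) mxE.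
by apply/normr0_eq0/eqP; rewrite eq_le normr_ge0 andbT -x0 ler_coord_enorm.
Qed.

Lemma enorm_le_sum x : enorm x <= \sum_i `|x i 0|.
Proof.
have [le_sqr ge0_sum] : \sum_i x i 0 ^+ 2 <= (\sum_i `|x i 0|) ^+ 2 /\
                        0 <= \sum_i `|x i 0|.
  apply: (big_ind2 (fun s t => s <= t ^+ 2 /\ 0 <= t)) => [|a b c d [? ?] [? ?]|i].
  - by rewrite expr0n.
  - by split; [nra | exact: addr_ge0].
  - by rewrite real_normK ?num_real.
by rewrite -(ger0_norm ge0_sum) -sqrtr_sqr; exact: ler_wsqrtr.
Qed.

Definition dot x y := \sum_i x i 0 * y i 0.

Lemma dot0l y : dot 0 y = 0.
Proof. by rewrite /dot big1 // => i _; rewrite mxE mul0r. Qed.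

Lemma dotC x y : dot x y = dot y x.
Proof. by apply: eq_bigr => i _; rewrite mulrC. Qed.

Lemma enorm_sqrD x y : enorm (x + y) ^+ 2 = enorm x ^+ 2 + 2 * dot x y + enorm y ^+ 2.
Proof.
rewrite !enorm_sqr /dot mulr_sumr -!big_split /=.
by apply: eq_bigr => i _; rewrite mxE; ring.
Qed.

Lemma dot_le_enorm x y : dot x y <= enorm x * enorm y.
Proof.
wlog [x_neq0 y_neq0] : x y / enorm x != 0 /\ enorm y != 0.
  move=> gen; have [/enorm_eq0 ->|x_neq0] := eqVneq (enorm x) 0.
    by rewrite dot0l enorm0 mul0r.
  have [/enorm_eq0 ->|y_neq0] := eqVneq (enorm y) 0.
    by rewrite dotC dot0l enorm0 mulr0.
  exact: gen.
set a := enorm x; set b := enorm y.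
have ab_gt0 : 0 < a * b by rewrite mulr_gt0 // lt0r ?x_neq0 ?y_neq0 ?enorm_ge0.
have dot_bxay : dot (b *: x) (- (a *: y)) = - (b * a * dot x y).
  by rewrite /dot mulr_sumr -sumrN; apply: eq_bigr => i _; rewrite !mxE; ring.
have := enorm_sqrD (b *: x) (- (a *: y)).
rewrite dot_bxay enormN !enormZ !ger0_norm ?enorm_ge0 // -/a -/b.
have := sqr_ge0 (enorm (b *: x - a *: y)); nra.
Qed.

Lemma ler_enormD x y : enorm (x + y) <= enorm x + enorm y.
Proof.
rewrite -(ler_sqr (enorm_ge0 _) (addr_ge0 (enorm_ge0 _) (enorm_ge0 _))) /=.
by rewrite enorm_sqrD; have := dot_le_enorm x y; nra.
Qed.

Lemma ler_enormB x y : enorm (x - y) <= enorm x + enorm y.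
Proof. by rewrite -(enormN y); exact: ler_enormD. Qed.

Lemma ler_enorm_vabs x y : enorm (vabs x - vabs y) <= enorm (x - y).
Proof.
apply: ler_enorm_sqr => i; rewrite !mxE -[(x i 0 - _) ^+ 2]real_normK ?num_real //.
by rewrite -[(_ - `|y i 0|) ^+ 2]real_normK ?num_real // ler_sqr ?nnegrE // ler_dist_dist.
Qed.

End EuclideanNorm.

Section OperatorNorm.
Context {R : realType} {m n : nat} (A : 'M[R]_(m, n)).
Implicit Types x : 'cV[R]_n.

Lemma opnorm_has_ubound :
  has_ubound [set enorm (A *m x) | x in [set x : 'cV[R]_n | enorm x <= 1]].
Proof.
exists (\sum_i \sum_j `|A i j|) => _ [x x_le1 <-].
apply: le_trans (enorm_le_sum _) _; apply: ler_sum => i _.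
rewrite mxE; apply: le_trans (ler_norm_sum _ _ _) _; apply: ler_sum => j _.
by rewrite normrM ler_piMr // (le_trans (ler_coord_enorm _ _) x_le1).
Qed.

Lemma ler_opnorm x : enorm x <= 1 -> enorm (A *m x) <= opnorm A.
Proof. by move=> x_le1; apply: ub_le_sup opnorm_has_ubound _ _; exists x. Qed.

Lemma opnorm_ge0 : 0 <= opnorm A.
Proof. by have := ler_opnorm 0; rewrite mulmx0 !enorm0; apply; rewrite ler01. Qed.

Lemma ler_opnormM x : enorm (A *m x) <= opnorm A * enorm x.
Proof.
have [/enorm_eq0 ->|x_neq0] := eqVneq (enorm x) 0.
  by rewrite mulmx0 !enorm0 mulr0.
have x_gt0 : 0 < enorm x by rewrite lt0r x_neq0 enorm_ge0.
have unit_x : enorm ((enorm x)^-1 *: x) <= 1.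
  by rewrite enormZ ger0_norm ?invr_ge0 ?enorm_ge0 // mulVf.
have := ler_opnorm _ unit_x.
by rewrite -scalemxAr enormZ ger0_norm ?invr_ge0 ?enorm_ge0 // ler_pdivrMl // mulrC.
Qed.

End OperatorNorm.

Lemma cvg_enorm_geometric {R : realType} {n} (s : nat -> 'cV[R]_n) (l : 'cV[R]_n)
    (K rho : R) :
  0 <= rho < 1 -> (forall k, enorm (s k - l) <= K * rho ^+ k) -> s @ \oo --> l.
Proof.
move=> /andP[rho_ge0 rho_lt1] le_s.
have geo0 : (fun k => K * rho ^+ k) @ \oo --> 0.
  by rewrite -(mulr0 K); apply: cvgMl_tmp; apply: cvg_expr; rewrite ger0_norm.
apply/cvgrPdist_le => e e_gt0.
move/cvgr0Pnorm_le: geo0 => /(_ e e_gt0); apply: filterS => k le_geo.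
apply: le_trans _ (le_trans (ler_norm _) le_geo).
rewrite [`|_|]mx_normrE; apply: bigmax_le => [|[i j] _].
  exact: le_trans (enorm_ge0 _) (le_s k).
rewrite (ord1 j) /= -opprB mxE normrN.
exact: le_trans (ler_coord_enorm _ _) (le_s k).
Qed.

(* The pair [(a, b)] is dominated by the nonnegative matrix
   [W = [[p, q], [c p, t + c q]]]; the two positivity hypotheses say that
   [1 - W] is a nonsingular M-matrix, i.e. the spectral radius of [W] is below 1,
   and then [r a + q b] with [r = rho - (t + c q)] is a Lyapunov function
   contracting by [rho < 1]. *)
Lemma coupled_recurrence_geometric {R : realType} (a b : nat -> R) (p q t c : R) :
  (forall k, 0 <= a k) -> (forall k, 0 <= b k) ->
  0 <= p -> 0 <= q -> 0 <= t -> 0 <= c ->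
  0 < 1 - (t + c * q) ->
  0 < (1 - p) * (1 - (t + c * q)) - q * (c * p) ->
  (forall k, a k.+1 <= p * a k + q * b k) ->
  (forall k, b k.+1 <= t * b k + c * a k.+1) ->
  exists K rho, 0 <= rho < 1 /\ forall k, a k <= K * rho ^+ k.
Proof.
move=> a_ge0 b_ge0 p_ge0 q_ge0 t_ge0 c_ge0 s_lt1 det_gt0 rec_a rec_b.
set s := t + c * q in s_lt1 det_gt0.
set d := _ - _ in det_gt0.
set rho := 1 - d / 2; set r := rho - s.
have s_ge0 : 0 <= s by have := mulr_ge0 c_ge0 q_ge0; rewrite /s; lra.
have d_le : d <= 1 - s.
  have := mulr_ge0 q_ge0 (mulr_ge0 c_ge0 p_ge0).
  have := mulr_ge0 p_ge0 (ltW s_lt1); rewrite /d; lra.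
have r_gt0 : 0 < r by rewrite /r /rho; lra.
have rho_lt1 : rho < 1 by rewrite /rho; lra.
have rho_ge0 : 0 <= rho by move: r_gt0; rewrite /r; lra.
have cross_le : q * (c * p) <= r * (rho - p).
  have -> : r * (rho - p) = q * (c * p) + (d / 2) * (p + s) + (d / 2) ^+ 2.
    by rewrite /r /rho /d /s; field.
  have := mulr_ge0 (ltW (divr_gt0 det_gt0 (ltr0Sn _ 1))) (addr_ge0 p_ge0 s_ge0).
  have := sqr_ge0 (d / 2); lra.
set V := fun k => r * a k + q * b k.
have V_contr k : V k.+1 <= rho * V k.
  have := rec_a k; have := rec_b k; have := a_ge0 k; have := b_ge0 k.
  have := a_ge0 k.+1; have := b_ge0 k.+1 => ? ? ? ? le_b le_a.
  have step_b : r * a k.+1 + q * b k.+1 <= (r + q * c) * a k.+1 + q * t * b k by nra.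
  have step_a : (r + q * c) * a k.+1 <= (r + q * c) * (p * a k + q * b k).
    by apply: ler_wpM2l => //; nra.
  have coef_a : (r + q * c) * p * a k <= rho * r * a k by apply: ler_wpM2r => //; nra.
  have coef_b : (r + q * c) * q + q * t = rho * q by rewrite /r /s; ring.
  rewrite /V; nra.
have V_geo k : V k <= rho ^+ k * V 0.
  elim: k => [|k ih]; first by rewrite expr0 mul1r.
  by apply: le_trans (V_contr k) _; rewrite exprS -mulrA ler_wpM2l.
exists (V 0 / r), rho; split; first by rewrite rho_ge0.
move=> k; have := V_geo k; rewrite /V mulrAC ler_pdivlMr //.
by have := b_ge0 k; have := a_ge0 k; nra.
Qed.

(* The hypotheses of [coupled_recurrence_geometric] for [p = alpha beta],
   [q = alpha], [t = |1 - tau|] and [c = tau gamma]. *)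
Lemma fpi_rate_conditions {R : realType} (alpha beta gamma tau : R) :
  0 <= alpha -> 0 <= beta -> 0 <= gamma ->
  alpha * (beta + gamma) < 1 ->
  0 < tau -> tau < 2 * (1 - alpha * beta) / (1 - alpha * beta + alpha * gamma) ->
  0 < 1 - (`|1 - tau| + tau * gamma * alpha) /\
  0 < (1 - alpha * beta) * (1 - (`|1 - tau| + tau * gamma * alpha))
      - alpha * (tau * gamma * (alpha * beta)).
Proof.
move=> a_ge0 b_ge0 g_ge0 + tau_gt0.
have ab_ge0 := mulr_ge0 a_ge0 b_ge0; have ag_ge0 := mulr_ge0 a_ge0 g_ge0.
rewrite mulrDr => ab_ag_lt1.
rewrite ltr_pdivlMr; last lra.
have [tau_le1|tau_gt1] := lerP tau 1 => tau_lt.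
  have -> : 1 - (1 - tau + tau * gamma * alpha) = tau * (1 - alpha * gamma) by ring.
  have -> : (1 - alpha * beta) * (tau * (1 - alpha * gamma))
      - alpha * (tau * gamma * (alpha * beta)) =
      tau * (1 - alpha * beta - alpha * gamma) by ring.
  by split; apply: mulr_gt0 => //; lra.
set w := 1 - (tau - 1 + _).
have det_gt0 : 0 < (1 - alpha * beta) * w - alpha * (tau * gamma * (alpha * beta)).
  have -> : (1 - alpha * beta) * w - alpha * (tau * gamma * (alpha * beta)) =
      2 * (1 - alpha * beta) - tau * (1 - alpha * beta + alpha * gamma).
    by rewrite /w; ring.
  lra.
split=> //; rewrite -(pmulr_rgt0 _ (_ : 0 < 1 - alpha * beta)); last lra.
by have := mulr_ge0 a_ge0 (mulr_ge0 (mulr_ge0 (ltW tau_gt0) g_ge0) ab_ge0); lra.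
Qed.

Lemma compl_addr_norm {R : realDomainType} (u v w : R) :
  0 <= u -> 0 <= v -> u * v = 0 -> 0 <= w -> u + w * v = `|u - w * v|.
Proof.
move=> u_ge0 v_ge0 /eqP; rewrite mulf_eq0 => /orP[]/eqP-> w_ge0.
  by rewrite add0r sub0r normrN ger0_norm // mulr_ge0.
by rewrite mulr0 addr0 subr0 ger0_norm.
Qed.

Lemma diag_mulmx (R : pzRingType) n (D : 'M[R]_n) (v : 'cV[R]_n) :
  is_diag_mx D -> D *m v = \col_i (D i i * v i 0).
Proof.
move/is_diag_mxP=> D_diag; apply/matrixP => i j; rewrite (ord1 j) !mxE.
by rewrite (bigD1 i) //= big1 ?addr0 // => k k_neq; rewrite D_diag ?mul0r // eq_sym.
Qed.

Definition modulus_arg {R : realType} {n} (A B Om : 'M[R]_n) (phi psi : R -> R)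
    (x : 'cV[R]_n) : 'cV[R]_n :=
  (A - Om *m B) *m x + cw phi x - Om *m cw psi x.

(* With [u = A x + phi x] and [v = B x + psi x], complementarity gives
   [u + Om v = |u - Om v|] componentwise. *)
Lemma vncp_sol_modulus {R : realType} {n} {A B Om : 'M[R]_n} {phi psi : R -> R} {x} :
  is_diag_mx Om -> (forall i, 0 <= Om i i) -> vncp_sol A B phi psi x ->
  (A + Om *m B) *m x + cw phi x + Om *m cw psi x =
  vabs (modulus_arg A B Om phi psi x).
Proof.
move=> Om_diag Om_ge0 [u_ge0 [v_ge0 uv0]].
set u := A *m x + cw phi x in u_ge0 uv0 *; set v := B *m x + cw psi x in v_ge0 uv0 *.
have uv_i0 i : u i 0 * v i 0 = 0.
  have uv_ge0 j : true -> 0 <= u^T 0 j * v j 0 by rewrite mxE mulr_ge0.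
  by move: uv0; rewrite mxE => /(psumr_eq0P uv_ge0)/(_ i isT); rewrite mxE.
have -> : (A + Om *m B) *m x + cw phi x + Om *m cw psi x = u + Om *m v.
  rewrite /u /v mulmxDl mulmxDr mulmxA.
  by apply/matrixP => i j; rewrite !mxE; ring.
have -> : modulus_arg A B Om phi psi x = u - Om *m v.
  rewrite /modulus_arg /u /v mulmxBl mulmxDr mulmxA.
  by apply/matrixP => i j; rewrite !mxE; ring.
rewrite diag_mulmx //; apply/matrixP => i j; rewrite (ord1 j).
by move: (compl_addr_norm _ _ _ (u_ge0 i) (v_ge0 i) (uv_i0 i) (Om_ge0 i)); rewrite !mxE.
Qed.

Section FPI.
Context {R : realType} {n : nat} {A B Om M N : 'M[R]_n} {phi psi : R -> R}
  {L1 L2 tau : R}.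
Hypothesis phi_lip :
  forall u v : 'cV[R]_n, enorm (cw phi u - cw phi v) <= L1 * enorm (u - v).
Hypothesis psi_lip :
  forall u v : 'cV[R]_n, enorm (cw psi u - cw psi v) <= L2 * enorm (u - v).

Let step := fpi_step A B Om M N phi psi tau.
Let g := modulus_arg A B Om phi psi.

Lemma vncp_sol_fpi_fixed x :
  is_diag_mx Om -> (forall i, 0 <= Om i i) -> A + Om *m B = M - N ->
  M \in unitmx -> vncp_sol A B phi psi x -> step (x, vabs (g x)) = (x, vabs (g x)).
Proof.
move=> Om_diag Om_ge0 split_AB M_unit x_sol.
have mod_eq := vncp_sol_modulus Om_diag Om_ge0 x_sol; rewrite split_AB in mod_eq.
have Mx : N *m x + vabs (g x) - cw phi x - Om *m cw psi x = M *m x.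
  by rewrite -mod_eq mulmxBl; apply/matrixP => i j; rewrite !mxE; ring.
rewrite /step /fpi_step /= Mx mulKmx // -/(g x).
by rewrite -scalerDl subrK scale1r.
Qed.

Lemma ler_enorm_nonlinearB u v :
  enorm (cw phi u - cw phi v) + enorm (Om *m (cw psi u - cw psi v)) <=
  (L1 + L2 * opnorm Om) * enorm (u - v).
Proof.
have := ler_opnormM Om (cw psi u - cw psi v).
have := ler_wpM2l (opnorm_ge0 Om) (psi_lip u v).
by have := phi_lip u v; lra.
Qed.

Lemma fpi_errorE_fst xs ys x y : step (xs, ys) = (xs, ys) ->
  (step (x, y)).1 - xs =
  invmx M *m (N *m (x - xs) + (y - ys) - (cw phi x - cw phi xs)
              - Om *m (cw psi x - cw psi xs)).
Proof.
move=> /(congr1 fst)/= fix_xs; rewrite -[in LHS]fix_xs /= -mulmxBr.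
by congr (_ *m _); rewrite !mulmxBr; apply/matrixP => i j; rewrite !mxE; ring.
Qed.

Lemma fpi_error_fst xs ys x y : step (xs, ys) = (xs, ys) ->
  enorm ((step (x, y)).1 - xs) <=
  opnorm (invmx M) *
    ((opnorm N + L1 + L2 * opnorm Om) * enorm (x - xs) + enorm (y - ys)).
Proof.
move=> fix_s; rewrite (fpi_errorE_fst _ _ x y fix_s).
apply: le_trans (ler_opnormM _ _) _; apply: ler_wpM2l; first exact: opnorm_ge0.
have := ler_enorm_nonlinearB x xs; have := ler_opnormM N (x - xs).
have := ler_enormD (N *m (x - xs)) (y - ys).
have := ler_enormB (N *m (x - xs) + (y - ys)) (cw phi x - cw phi xs).
have := ler_enormB (N *m (x - xs) + (y - ys) - (cw phi x - cw phi xs))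
  (Om *m (cw psi x - cw psi xs)).
lra.
Qed.

Hypothesis tau_gt0 : 0 < tau.

Lemma fpi_error_snd xs ys x y : step (xs, ys) = (xs, ys) ->
  enorm ((step (x, y)).2 - ys) <=
  `|1 - tau| * enorm (y - ys) +
  tau * ((opnorm (A - Om *m B) + L1 + L2 * opnorm Om) * enorm ((step (x, y)).1 - xs)).
Proof.
move=> fix_s; set x' := (step (x, y)).1.
have fix_ys : ys = (1 - tau) *: ys + tau *: vabs (g xs).
  by rewrite -{1}[ys](congr1 snd fix_s) -{2}[xs](congr1 fst fix_s).
have -> : (step (x, y)).2 - ys =
    (1 - tau) *: (y - ys) + tau *: (vabs (g x') - vabs (g xs)).
  have -> : (step (x, y)).2 = (1 - tau) *: y + tau *: vabs (g x') by [].
  by rewrite {1}fix_ys; apply/matrixP => i j; rewrite !mxE; ring.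
apply: le_trans (ler_enormD _ _) _; rewrite !enormZ (gtr0_norm tau_gt0) lerD2l.
apply: ler_wpM2l; first exact: ltW.
apply: le_trans (ler_enorm_vabs _ _) _.
have -> : g x' - g xs = (A - Om *m B) *m (x' - xs) + (cw phi x' - cw phi xs)
    - Om *m (cw psi x' - cw psi xs).
  by rewrite /g /modulus_arg !mulmxBr; apply/matrixP => i j; rewrite !mxE; ring.
have := ler_enorm_nonlinearB x' xs; have := ler_opnormM (A - Om *m B) (x' - xs).
have := ler_enormD ((A - Om *m B) *m (x' - xs)) (cw phi x' - cw phi xs).
have := ler_enormB ((A - Om *m B) *m (x' - xs) + (cw phi x' - cw phi xs))
  (Om *m (cw psi x' - cw psi xs)).
lra.
Qed.

Hypotheses (L1_ge0 : 0 <= L1) (L2_ge0 : 0 <= L2).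

Lemma fpi_seq_cvg xs ys x0 y0 : step (xs, ys) = (xs, ys) ->
  let alpha := opnorm (invmx M) in
  let beta := opnorm N + L1 + L2 * opnorm Om in
  let gamma := opnorm (A - Om *m B) + L1 + L2 * opnorm Om in
  alpha * (beta + gamma) < 1 ->
  tau < 2 * (1 - alpha * beta) / (1 - alpha * beta + alpha * gamma) ->
  (fun k => (fpi_seq A B Om M N phi psi tau x0 y0 k).1) @ \oo --> xs.
Proof.
move=> fix_s alpha beta gamma rate tau_lt.
have alpha_ge0 : 0 <= alpha := opnorm_ge0 _.
have LOm_ge0 : 0 <= L2 * opnorm Om by rewrite mulr_ge0 ?opnorm_ge0.
have beta_ge0 : 0 <= beta by rewrite !addr_ge0 ?opnorm_ge0.
have gamma_ge0 : 0 <= gamma by rewrite !addr_ge0 ?opnorm_ge0.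
set s := fpi_seq A B Om M N phi psi tau x0 y0.
have s_succ k : s k.+1 = step (s k) by [].
set a := fun k => enorm ((s k).1 - xs); set b := fun k => enorm ((s k).2 - ys).
have rec_a k : a k.+1 <= alpha * beta * a k + alpha * b k.
  have := fpi_error_fst _ _ (s k).1 (s k).2 fix_s.
  by rewrite -surjective_pairing -s_succ -mulrA -mulrDr.
have rec_b k : b k.+1 <= `|1 - tau| * b k + tau * gamma * a k.+1.
  have := fpi_error_snd _ _ (s k).1 (s k).2 fix_s.
  by rewrite -surjective_pairing -s_succ -mulrA.
have [rate_s rate_det] :=
  fpi_rate_conditions _ _ _ _ alpha_ge0 beta_ge0 gamma_ge0 rate tau_gt0 tau_lt.
have [K [rho [rho01 le_a]]] := coupled_recurrence_geometric a b _ _ _ _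
  (fun k => enorm_ge0 _) (fun k => enorm_ge0 _) (mulr_ge0 alpha_ge0 beta_ge0)
  alpha_ge0 (normr_ge0 _) (mulr_ge0 (ltW tau_gt0) gamma_ge0) rate_s rate_det rec_a rec_b.
exact: cvg_enorm_geometric rho01 le_a.
Qed.

End FPI.

Theorem theorem3p1 (R : realType) (n : nat) (A B Om M N : 'M[R]_n)
  (phi psi : R -> R) (L1 L2 tau : R) (xstar : 'cV[R]_n) :
  is_diag_mx Om -> (forall i, 0 < Om i i) ->
  0 < L1 -> 0 < L2 ->
  (forall u v : 'cV[R]_n, enorm (cw phi u - cw phi v) <= L1 * enorm (u - v)) ->
  (forall u v : 'cV[R]_n, enorm (cw psi u - cw psi v) <= L2 * enorm (u - v)) ->
  A + Om *m B = M - N -> M \in unitmx ->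
  vncp_sol A B phi psi xstar ->
  let alpha := opnorm (invmx M) in
  let beta := opnorm N + L1 + L2 * opnorm Om in
  let gamma := opnorm (A - Om *m B) + L1 + L2 * opnorm Om in
  alpha * (beta + gamma) < 1 ->
  0 < tau -> tau < 2 * (1 - alpha * beta) / (1 - alpha * beta + alpha * gamma) ->
  (forall x0 y0 : 'cV[R]_n,
     (fun k => (fpi_seq A B Om M N phi psi tau x0 y0 k).1) @ \oo --> xstar) /\
  (forall x : 'cV[R]_n, vncp_sol A B phi psi x -> x = xstar).
Proof.
move=> Om_diag Om_gt0 L1_gt0 L2_gt0 phi_lip psi_lip split_AB M_unit xstar_sol
  alpha beta gamma rate tau_gt0 tau_lt.
have Om_ge0 i : 0 <= Om i i := ltW (Om_gt0 i).
have cvg_sol x x0 y0 : vncp_sol A B phi psi x ->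
    (fun k => (fpi_seq A B Om M N phi psi tau x0 y0 k).1) @ \oo --> x.
  move=> x_sol.
  have fixed := vncp_sol_fpi_fixed (tau := tau) _ Om_diag Om_ge0 split_AB M_unit x_sol.
  exact: (fpi_seq_cvg phi_lip psi_lip tau_gt0 (ltW L1_gt0) (ltW L2_gt0) _ _ _ _
    fixed rate tau_lt).
split=> [x0 y0|x x_sol]; first exact: cvg_sol.
exact: cvg_unique (cvg_sol x 0 0 x_sol) (cvg_sol xstar 0 0 xstar_sol).
Qed.
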